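(* Let $\gamma=(\gamma_1,\dots,\gamma_b)$ be a parallel map on $V=V_1\oplus\cdots\oplus V_b$, $V_i\cong(\mathbb F_2)^m$, with $0\gamma=0$. Let $U$ be a subspace of $V$ of dimension $n-1$. Suppose that for every $i\notin J_U$, $\gamma_i$ is differentially $2^r$-uniform with $r<m$ and strongly $(r-1)$-anti-invariant, and for every $j\in J_U$, $\gamma_j$ is differentially $2^r$-uniform with $r<m-1$ and strongly $r$-anti-invariant. If $\gamma$ maps $\mathcal{LA}_U(W_1|W_2)$ onto a non-trivial partition $\mathcal L(W)$, then $W_1$, $W_2$, $W$ are walls and $W_1=W_2=W$; in particular $\mathcal{LA}_U(W_1|W_2)$ is linear.
   Context: Let $m,b>1$, $n=mb$, $V=(\mathbb F_2)^n=V_1\oplus\cdots\oplus V_b$, $V_i\cong(\mathbb F_2)^m$. Permutations act on the right. A parallel map is $\gamma\in\mathrm{Sym}(V)$ with $(v_1\oplus\cdots\oplus v_b)\gamma=v_1\gamma_1\oplus\cdots\oplus v_b\gamma_b$, $\gamma_i\in\mathrm{Sym}(V_i)$. A wall is $\bigoplus_{i\in I}V_i$ with $\emptyset\ne I\subsetneq\{1,\dots,b\}$. $J_U=\{j: V_j\cap U\subsetneq V_j\}$. $f:(\mathbb F_2)^m\to(\mathbb F_2)^m$ is differentially $\delta$-uniform if $\delta=\max_{a\ne0,b}|\{x:f(x+a)+f(x)=b\}|$; for $f(0)=0$, $f$ is strongly $s$-anti-invariant if for all subspaces $U',W'$ with $f(U')=W'$, either $\dim U'=\dim W'<m-s$ or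 $U'=W'=(\mathbb F_2)^m$. A permutation maps $\mathcal A$ onto $\mathcal B$ if it sends the blocks of $\mathcal A$ exactly onto those of $\mathcal B$; trivial partitions are the singleton partition and $\{V\}$. $\mathcal L(W)=\{W+v:v\in V\}$. For subspaces $W_1,W_2\subseteq U$, $\mathcal{LA}_U(W_1|W_2)=\{W_1+v:v\in U\}\cup\{(W_2+\bar v)+v:v\in U\}$ for any $\bar v\in V\setminus U$. *)

From HB Require Import structures.
From mathcomp Require Import all_boot all_order all_algebra perm.
Set Implicit Arguments. Unset Strict Implicit. Unset Printing Implicit Defensive.
Import GRing.Theory.
Local Open Scope ring_scope.

(* Conventions.
   - F_2^m is 'rV['F_2]_m.
   - V = V_1 (+) ... (+) V_b is the matrix space 'M['F_2]_(b, m):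
     row i of a matrix is its component in V_i = (F_2)^m; n = b * m.
   - Subspaces are {vspace _} (mathcomp vector.v), dimension is \dim.
   - Partitions are sets of blocks, i.e. {set {set V}}.
   - Permutations act on the right; we write (x)gamma as "gamma x". *)

Notation Fm m := 'rV['F_2]_m.
Notation Vsp b m := 'M['F_2]_(b, m).

Definition par_map (b m : nat) (g : 'I_b -> {perm Fm m}) (x : Vsp b m) : Vsp b m :=
  \matrix_(i, j) (g i (row i x)) 0 j.

Definition in_block (b m : nat) (i : 'I_b) (x : Vsp b m) : bool :=
  [forall k : 'I_b, (k != i) ==> (row k x == 0)].

Definition wall (b m : nat) (W : {vspace Vsp b m}) : Prop :=
  exists I : {set 'I_b}, [/\ I != set0, I != setT &
    forall x : Vsp b m, (x \in W) = [forall k : 'I_b, (k \notin I) ==> (row k x == 0)]].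

Definition J_of (b m : nat) (U : {vspace Vsp b m}) : {set 'I_b} :=
  [set j : 'I_b | [exists x : Vsp b m, in_block j x && (x \notin U)]].

Definition diff_unif (m : nat) (f : Fm m -> Fm m) : nat :=
  \max_(a : Fm m | a != 0%R) \max_(c : Fm m) #|[set x : Fm m | (f (x + a) + f x == c)%R]|.

(* strongly s-anti-invariant (f(0) = 0 assumed separately) *)
Definition strongly_anti_inv (m s : nat) (f : Fm m -> Fm m) : Prop :=
  forall U' W' : {vspace Fm m},
    [set f x | x in [set y : Fm m | y \in U']] = [set y : Fm m | y \in W'] ->
    (\dim U' = \dim W' /\ (\dim U' < m - s)%N) \/ (U' = fullv /\ W' = fullv).

Definition coset (b m : nat) (W : {vspace Vsp b m}) (v : Vsp b m) : {set Vsp b m} :=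
  [set x : Vsp b m | x - v \in W].

Definition Lpart (b m : nat) (W : {vspace Vsp b m}) : {set {set Vsp b m}} :=
  [set coset W v | v : Vsp b m].

(* LA_U(W1|W2), computed with a given vbar outside U *)
Definition LApart (b m : nat) (U W1 W2 : {vspace Vsp b m}) (vbar : Vsp b m)
  : {set {set Vsp b m}} :=
  [set coset W1 v | v in [set y : Vsp b m | y \in U]] :|:
  [set coset W2 (vbar + v) | v in [set y : Vsp b m | y \in U]].

Definition maps_onto (T : finType) (g : T -> T) (A B : {set {set T}}) : Prop :=
  [set g @: X | X : {set T} in A] = B.

Definition trivial_partition (T : finType) (P : {set {set T}}) : Prop :=
  P = [set [set x] | x : T] \/ P = [set [set: T]].

From HB Require Import structures.
From mathcomp Require Import all_boot all_order all_algebra perm.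
From mathcomp Require Import finfield zify.
Set Implicit Arguments. Unset Strict Implicit. Unset Printing Implicit Defensive.
Import GRing.Theory.
Local Open Scope ring_scope.

(* For a subspace X of V let X_i = {a | (a in V_i) in X} be its slice in the
   i-th block. Since gamma 0 = 0, gamma maps the block W1 onto the block W, so
   gamma_i maps W1_i onto W_i. If some w in W1 has w_i <> 0 then, for every a
   with (a in V_i) in U, gamma maps the cosets W1 + a and W1 of LA_U(W1|W2) into
   cosets of W, so gamma_i(a + w_i) + gamma_i(a) + gamma_i(w_i) lies in W_i.
   Counting with differential 2^r-uniformity gives |U_i| < 2^(dim W_i + r),
   where U_i = V_i if i is not in J_U and U_i is a hyperplane of V_i otherwise.
   Hence dim W_i >= m - r + 1, resp. dim W_i >= m - r, and strong
   anti-invariance forces W1_i = W_i = V_i, which is impossible for i in J_U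
   because W1 <= U. So W1 is the sum of the blocks it meets; it is contained in
   W and has the same size, hence W1 = W. Finally gamma maps W2 + vbar into a
   coset of W = W1, which forces W2 <= W1, and again |W2| = |W1|. *)

Lemma addrr_F2 (V : lmodType 'F_2) (x : V) : x + x = 0.
Proof. by rewrite -mulr2n -scaler_nat pcharf0 ?pchar_Fp // scale0r. Qed.

Lemma oppr_F2 (V : lmodType 'F_2) (x : V) : - x = x.
Proof. by rewrite -[LHS]add0r -(addrr_F2 x) addrK. Qed.

Lemma addr_eq0_F2 (V : lmodType 'F_2) (x y : V) : (x + y == 0) = (x == y).
Proof. by rewrite -[x == y]subr_eq0 oppr_F2. Qed.

Lemma F2_neq0 (k : 'F_2) : k != 0 -> k = 1.
Proof. by case: k => [[|[|n]] //= Hn] _; apply: val_inj. Qed.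

Lemma card_vspace_F2 p q (X : {vspace 'M['F_2]_(p, q)}) : #|X| = (2 ^ \dim X)%N.
Proof. by rewrite card_vspace card_Fp. Qed.

Lemma vspace_F2_eq_card p q (X Y : {vspace 'M['F_2]_(p, q)}) :
  (X <= Y)%VS -> #|Y| = #|X| -> X = Y.
Proof.
move=> sXY cYX; apply/eqP.
by rewrite eqEdim sXY -(@leq_exp2l 2) // -!card_vspace_F2 cYX leqnn.
Qed.

Lemma hyperplane_addr (vT : vectType 'F_2) (U : {vspace vT}) x y :
  \dim U = (\dim {:vT}).-1 -> x \notin U -> y \notin U -> x + y \in U.
Proof.
move=> dimU xU yU.
have UxT : (U + <[x]>)%VS = fullv.
  apply/eqP; rewrite eqEdim subvf /=.
  have : (\dim U < \dim (U + <[x]>))%N.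
    rewrite (ltn_leqif (dimv_leqif_eq (addvSl _ _))).
    by apply: contraNneq xU => ->; rewrite (subvP (addvSr _ _)) ?memv_line.
  have := dimvS (subvf (U + <[x]>)); lia.
have : y \in (U + <[x]>)%VS by rewrite UxT memvf.
case/memv_addP => u uU [z /vlineP [k ->] defy]; rewrite defy in yU *.
have /F2_neq0 -> : k != 0 by apply: contraNneq yU => ->; rewrite scale0r addr0.
by rewrite scale1r addrCA addrr_F2 addr0.
Qed.

Section RowEmbedding.
Variables (F : fieldType) (b m : nat).
Implicit Types (x : 'M[F]_(b, m)) (a : 'rV[F]_m).

Definition emb_row (i : 'I_b) a : 'M[F]_(b, m) := delta_mx i 0 *m a.

Lemma row_emb_row i k a : row k (emb_row i a) = if k == i then a else 0.
Proof.
apply/rowP => j; rewrite !mxE big_ord1 !mxE.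
by case: (k == i); rewrite ?mul1r ?mul0r ?mxE.
Qed.

Lemma emb_row0 i : emb_row i 0 = 0.
Proof. exact: mulmx0. Qed.

Lemma emb_rowD i a c : emb_row i (a + c) = emb_row i a + emb_row i c.
Proof. exact: mulmxDr. Qed.

Lemma sum_emb_row x : x = \sum_k emb_row k (row k x).
Proof.
apply/row_matrixP => k; rewrite linear_sum (bigD1 k) //= row_emb_row eqxx.
by rewrite big1 ?addr0 // => i ik; rewrite row_emb_row eq_sym (negbTE ik).
Qed.

Lemma memv_emb_rows (X : {vspace 'M[F]_(b, m)}) x :
  (forall k, emb_row k (row k x) \in X) -> x \in X.
Proof. by move=> Xx; rewrite (sum_emb_row x) memv_suml. Qed.

Definition slice (i : 'I_b) (X : {vspace 'M[F]_(b, m)}) : {vspace 'rV[F]_m} :=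
  (linfun (mulmx (delta_mx i (0 : 'I_1))) @^-1: X)%VS.

Lemma mem_slice i X a : (a \in slice i X) = (emb_row i a \in X).
Proof. by rewrite -memv_preim lfunE. Qed.

End RowEmbedding.

Lemma in_block_emb_row b m (i : 'I_b) (a : Fm m) : in_block i (emb_row i a).
Proof. by apply/forallP => k; apply/implyP => /negbTE ki; rewrite row_emb_row ki. Qed.

Lemma in_blockP b m (i : 'I_b) (x : Vsp b m) : in_block i x -> x = emb_row i (row i x).
Proof.
move=> /forallP xi; apply/row_matrixP => k; rewrite row_emb_row.
by case: eqP => [-> //|/eqP ki]; apply/eqP; rewrite (implyP (xi k)).
Qed.

Definition row_support b m (X : {vspace Vsp b m}) : {set 'I_b} :=
  [set k | [exists x, (x \in X) && (row k x != 0)]].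

Lemma row_support_row0 b m (X : {vspace Vsp b m}) x k :
  x \in X -> k \notin row_support X -> row k x = 0.
Proof.
move=> Xx; apply: contraNeq => xk; rewrite inE.
by apply/existsP; exists x; rewrite Xx.
Qed.

Lemma row_support_neq0 b m (X : {vspace Vsp b m}) : X != 0%VS -> row_support X != set0.
Proof.
rewrite -vpick0 => x0; apply/set0Pn.
have [k xk] : exists k, row k (vpick X) != 0.
  apply/existsP; apply: contraR x0 => /existsPn x0.
  by apply/eqP/row_matrixP => k; rewrite row0; apply/eqP/negPn.
by exists k; rewrite inE; apply/existsP; exists (vpick X); rewrite memv_pick.
Qed.

Lemma card_le_imset_fibers (T T' : finType) (h : T -> T') (S : {set T}) k :
  (forall y, #|[set x in S | h x == y]| <= k)%N -> (#|S| <= #|h @: S| * k)%N.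
Proof.
move=> fib; rewrite -sum1_card (partition_big_imset h) /= -sum_nat_const.
by apply: leq_sum => y _; rewrite sum1dep_card.
Qed.

Lemma card_diff_fiber_le m (f : Fm m -> Fm m) (p c : Fm m) : p != 0 ->
  (#|[set x | (f (x + p) + f x == c)%R]| <= diff_unif f)%N.
Proof.
move=> p0; apply: leq_trans (leq_bigmax_cond
  (F := fun a => \max_c0 #|[set x | (f (x + a) + f x == c0)%R]|)%N _ p0).
exact: (leq_bigmax c).
Qed.

Lemma card_le_diff_image m (f : Fm m -> Fm m) (p c : Fm m) (S : {set Fm m}) : p != 0 ->
  (#|S| <= #|[set (f (a + p) + f a + c)%R | a in S]| * diff_unif f)%N.
Proof.
move=> p0; apply: card_le_imset_fibers => y.
apply: leq_trans (card_diff_fiber_le f (y + c) p0); apply: subset_leq_card.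
apply/subsetP => a; rewrite !inE => /andP [_ /eqP <-].
by rewrite -addrA addrr_F2 addr0.
Qed.

Section ParallelMap.
Variables (b m : nat) (g : 'I_b -> {perm Fm m}).
Local Notation gam := (par_map g).

Lemma row_par_map k x : row k (gam x) = g k (row k x).
Proof. by apply/rowP => j; rewrite !mxE. Qed.

Lemma par_map_inj : injective gam.
Proof.
move=> x y gxy; apply/row_matrixP => k.
by apply: (@perm_inj _ (g k)); rewrite -!row_par_map gxy.
Qed.

Hypothesis gam0 : gam 0 = 0.

Lemma perm_block0 k : g k 0 = 0.
Proof. by have := row_par_map k 0; rewrite gam0 !row0. Qed.

Lemma par_map_emb_row i a : gam (emb_row i a) = emb_row i (g i a).
Proof.
apply/row_matrixP => k; rewrite row_par_map !row_emb_row.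
by case: eqP => [-> //|_]; rewrite perm_block0.
Qed.

End ParallelMap.

Section Cosets.
Variables (b m : nat) (X : {vspace Vsp b m}).

Lemma coset_id v : v \in X -> coset X v = [set x | x \in X].
Proof. by move=> Xv; apply/setP => x; rewrite !inE rpredBr. Qed.

Lemma card_coset v : #|coset X v| = #|X|.
Proof.
have -> : coset X v = [set x + v | x in [set x | x \in X]].
  apply/setP => y; rewrite inE; apply/idP/imsetP => [Xyv|[x]].
    by exists (y - v); rewrite ?inE ?subrK.
  by rewrite inE => Xx ->; rewrite addrK.
by rewrite card_imset ?cardsE //; apply: addIr.
Qed.

End Cosets.

Lemma Lpart0 b m : Lpart (0%VS : {vspace Vsp b m}) = [set [set x] | x : Vsp b m].
Proof.
by apply: eq_imset => v; apply/setP => x; rewrite !inE memv0 subr_eq0.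
Qed.

Section OntoLinearPartition.
Variables (b m : nat) (g : 'I_b -> {perm Fm m}).
Local Notation gam := (par_map g).
Hypothesis gam0 : gam 0 = 0.
Variables (U W1 W2 W : {vspace Vsp b m}) (vbar : Vsp b m).
Hypothesis gam_onto : maps_onto gam (LApart U W1 W2 vbar) (Lpart W).

Lemma image_block X : X \in LApart U W1 W2 vbar -> exists v, gam @: X = coset W v.
Proof.
move=> LAX; have : gam @: X \in Lpart W by rewrite -gam_onto imset_f.
by case/imsetP => v _ ->; exists v.
Qed.

Lemma image_block_addr X x y : X \in LApart U W1 W2 vbar -> x \in X -> y \in X ->
  gam x + gam y \in W.
Proof.
case/image_block=> v gamX Xx Xy.
have memW z : z \in X -> gam z - v \in W.
  by move=> Xz; have := imset_f gam Xz; rewrite gamX inE.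
by have := memvB (memW x Xx) (memW y Xy); rewrite opprB addrA subrK oppr_F2.
Qed.

Lemma coset_W1_block u : u \in U -> coset W1 u \in LApart U W1 W2 vbar.
Proof. by move=> Uu; rewrite inE imset_f ?inE. Qed.

Lemma coset_W2_block : coset W2 vbar \in LApart U W1 W2 vbar.
Proof.
by rewrite inE; apply/orP; right; apply/imsetP; exists 0; rewrite ?inE ?rpred0 ?addr0.
Qed.

Lemma par_map_addW1 u w : u \in U -> w \in W1 -> gam (u + w) + gam u \in W.
Proof.
move=> Uu W1w; apply: image_block_addr (coset_W1_block Uu) _ _; rewrite inE.
  by rewrite addrC addKr.
by rewrite subrr rpred0.
Qed.

Lemma par_map_addW2 w : w \in W2 -> gam (vbar + w) + gam vbar \in W.
Proof.
move=> W2w; apply: image_block_addr coset_W2_block _ _; rewrite inE.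
  by rewrite addrC addKr.
by rewrite subrr rpred0.
Qed.

Lemma par_map_W1 : gam @: [set x | x \in W1] = [set x | x \in W].
Proof.
have [v gamW1] := image_block (coset_W1_block (rpred0 U)).
rewrite (coset_id (rpred0 W1)) in gamW1; rewrite gamW1 coset_id //.
have : gam 0 \in coset W v by rewrite -gamW1 imset_f ?inE ?rpred0.
by rewrite gam0 inE sub0r rpredN.
Qed.

Lemma card_W_W1 : #|W| = #|W1|.
Proof.
by rewrite -[#|W|]cardsE -[#|W1|]cardsE -par_map_W1 card_imset //; apply: par_map_inj.
Qed.

Lemma card_W2_W : #|W2| = #|W|.
Proof.
have [v gamW2] := image_block coset_W2_block.
rewrite -(card_coset W2 vbar) -(card_coset W v) -gamW2 card_imset //.
exact: par_map_inj.
Qed.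

Lemma slice_image i :
  [set g i a | a in [set y | y \in slice i W1]] = [set y | y \in slice i W].
Proof.
apply/setP => y; rewrite inE mem_slice; apply/imsetP/idP => [[a]|Wy].
  rewrite inE mem_slice => W1a ->.
  have : gam (emb_row i a) \in [set x | x \in W] by rewrite -par_map_W1 imset_f ?inE.
  by rewrite inE (par_map_emb_row gam0).
have : emb_row i y \in gam @: [set x | x \in W1] by rewrite par_map_W1 inE.
case/imsetP => x; rewrite inE => W1x gamx.
have xi : x = emb_row i (row i x).
  apply/row_matrixP => k; rewrite row_emb_row; case: eqP => [-> //|/eqP ki].
  apply: (@perm_inj _ (g k)).
  by rewrite -row_par_map -gamx row_emb_row (negbTE ki) (perm_block0 gam0).
exists (row i x); first by rewrite inE mem_slice -xi.
by rewrite -row_par_map -gamx row_emb_row eqxx.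
Qed.

Lemma diff_mem_slice i a w : emb_row i a \in U -> w \in W1 ->
  g i (a + row i w) + g i a + g i (row i w) \in slice i W.
Proof.
move=> Ua W1w; rewrite mem_slice.
have := memvD (par_map_addW1 Ua W1w) (par_map_addW1 (rpred0 U) W1w).
congr (_ \in W); apply/row_matrixP => k.
rewrite !linearD /= !row_par_map !linearD /= !row_emb_row !row0.
rewrite add0r (perm_block0 gam0) addr0.
by case: eqP => [-> //|_]; rewrite add0r (perm_block0 gam0) addr0 addrr_F2.
Qed.

Lemma card_lt_slice i r (S : {set Fm m}) w :
  (forall a, a \in S -> emb_row i a \in U) -> (diff_unif (g i) <= 2 ^ r)%N ->
  (2 ^ r < #|S|)%N -> w \in W1 -> row i w != 0 ->
  (#|S| < 2 ^ (\dim (slice i W) + r))%N.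
Proof.
(* Count derivatives of g i: in direction row i w, to find a nonzero vector of
   the slice of W, hence a nonzero p in the slice of W1; then in direction p,
   where the derivative never vanishes and still takes values in the slice of W. *)
move=> US dug S_gt W1w wi0; set Wi := [set y | y \in slice i W].
have Wi0 : 0 \in Wi by rewrite inE rpred0.
have : (#|S| <= #|Wi| * 2 ^ r)%N.
  apply: leq_trans (card_le_diff_image (g i) (g i (row i w)) S wi0) _.
  rewrite leq_mul // subset_leq_card //; apply/subsetP => _ /imsetP [a Sa ->].
  by rewrite inE diff_mem_slice ?US.
rewrite (cardsD1 0 Wi) Wi0 => /(leq_trans S_gt).
rewrite -{1}[(2 ^ r)%N]mul1n ltn_pmul2r ?expn_gt0 // add1n ltnS.
rewrite card_gt0 => /set0Pn [q]; rewrite !inE => /andP [q0 Wq].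
have : q \in Wi by rewrite inE.
rewrite /Wi -slice_image => /imsetP [p]; rewrite inE => W1p qp.
have p0 : p != 0 by apply: contraNneq q0 => p0; rewrite qp p0 (perm_block0 gam0).
have : (#|S| <= #|Wi :\ 0%R| * 2 ^ r)%N.
  apply: leq_trans (card_le_diff_image (g i) 0 S p0) _.
  rewrite leq_mul // subset_leq_card //; apply/subsetP => _ /imsetP [a Sa ->].
  rewrite !inE addr0; apply/andP; split.
    by apply: contra p0; rewrite addr_eq0_F2 => /eqP/perm_inj/(canRL (addKr a)) ->; rewrite addNr.
  rewrite mem_slice in W1p.
  have := memvD (diff_mem_slice (US a Sa) W1p) Wq.
  by rewrite row_emb_row eqxx -qp -addrA addrr_F2 addr0.
have := cardsD1 0 Wi; rewrite Wi0 /Wi cardsE card_vspace_F2 expnD add1n => ->.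
move/leq_ltn_trans; apply.
by rewrite mulSn -{1}[(_ * 2 ^ r)%N]add0n ltn_add2r expn_gt0.
Qed.

Hypothesis W1U : (W1 <= U)%VS.
Hypothesis dimU : \dim U = (b * m).-1.

Lemma hyperplane_U x y : x \notin U -> y \notin U -> x + y \in U.
Proof. by apply: hyperplane_addr; rewrite dimvf dim_matrix. Qed.

Lemma LApart_hyperplane X : vbar \notin U -> LApart U X X vbar = Lpart X.
Proof.
move=> vbarU; apply/setP => Y; apply/idP/imsetP => [|[v _ ->]].
  by rewrite inE => /orP [] /imsetP [v _ ->]; [exists v | exists (vbar + v)].
rewrite inE; have [Uv|Uv] := boolP (v \in U); first by rewrite imset_f ?inE.
apply/orP; right; apply/imsetP; exists (vbar + v); first by rewrite inE hyperplane_U.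
by rewrite addrA addrr_F2 add0r.
Qed.

Lemma card_block_cap_U i : i \in J_of U -> (2 ^ m <= 2 * #|[set a | emb_row i a \in U]|)%N.
Proof.
rewrite inE => /existsP [x /andP [/in_blockP xi Ux]]; rewrite xi in Ux.
set S := [set a | emb_row i a \in U]; have : (#|~: S| <= #|S|)%N.
  rewrite -(card_imset (~: S) (addIr (row i x))); apply: subset_leq_card.
  apply/subsetP => _ /imsetP [a Ua ->].
  by rewrite !inE in Ua *; rewrite emb_rowD hyperplane_U.
have := cardsC S; rewrite card_mx card_Fp // mul1n; lia.
Qed.

Variable r : nat.

Lemma slice_full_notin_J i w : i \notin J_of U ->
  diff_unif (g i) = (2 ^ r)%N -> (r < m)%N -> strongly_anti_inv (r - 1) (g i) ->
  w \in W1 -> row i w != 0 -> slice i W1 = fullv /\ slice i W = fullv.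
Proof.
move=> iJ du rm sai W1w wi0.
have US a : a \in [set: Fm m] -> emb_row i a \in U.
  move=> _; move: iJ; rewrite inE negb_exists => /forallP /(_ (emb_row i a)).
  by rewrite in_block_emb_row negbK.
have cardT : #|[set: Fm m]| = (2 ^ m)%N by rewrite cardsT card_mx card_Fp // mul1n.
have S_gt : (2 ^ r < #|[set: Fm m]|)%N by rewrite cardT ltn_exp2l.
have := card_lt_slice US (eq_leq du) S_gt W1w wi0.
rewrite cardT ltn_exp2l // => dimW.
have [[dimW1 dimW1_lt]|//] := sai _ _ (slice_image i).
rewrite dimW1 in dimW1_lt; move: dimW dimW1_lt; move: (\dim (slice i W)) => d; lia.
Qed.

Lemma row_zero_in_J i w : i \in J_of U ->
  diff_unif (g i) = (2 ^ r)%N -> (r < m - 1)%N -> strongly_anti_inv r (g i) ->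
  w \in W1 -> row i w = 0.
Proof.
move=> iJ du rm sai W1w; apply/eqP/contraT => wi0.
set S := [set a | emb_row i a \in U].
have cardS : (2 ^ m <= 2 * #|S|)%N by exact: card_block_cap_U.
have US a : a \in S -> emb_row i a \in U by rewrite inE.
have S_gt : (2 ^ r < #|S|)%N.
  have : (2 ^ r.+1 < 2 ^ m)%N by rewrite ltn_exp2l //; lia.
  by rewrite expnS; lia.
have := card_lt_slice US (eq_leq du) S_gt W1w wi0.
have [[dimW1 dimW1_lt]|[W1T _]] := sai _ _ (slice_image i).
  rewrite -dimW1 => S_lt.
  have : (2 ^ m < 2 ^ (\dim (slice i W1) + r).+1)%N.
    by rewrite expnS; apply: leq_ltn_trans cardS _; rewrite ltn_pmul2l.
  by rewrite ltn_exp2l //; move: dimW1_lt; move: (\dim (slice i W1)) => d; lia.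
move: iJ; rewrite inE => /existsP [x /andP [/in_blockP xi]].
by rewrite xi (subvP W1U) // -mem_slice W1T memvf.
Qed.

Hypothesis g_notin_J : forall i, i \notin J_of U ->
  [/\ diff_unif (g i) = (2 ^ r)%N, (r < m)%N & strongly_anti_inv (r - 1) (g i)].
Hypothesis g_in_J : forall i, i \in J_of U ->
  [/\ diff_unif (g i) = (2 ^ r)%N, (r < m - 1)%N & strongly_anti_inv r (g i)].

Lemma W1_contains_block i w : w \in W1 -> row i w != 0 ->
  [/\ forall a, emb_row i a \in W1, forall a, emb_row i a \in W & i \notin J_of U].
Proof.
move=> W1w wi0; have iJ : i \notin J_of U.
  apply: contra wi0 => iJ; have [du rm sai] := g_in_J iJ.
  by rewrite (row_zero_in_J iJ du rm sai W1w).
have [du rm sai] := g_notin_J iJ.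
have [W1T WT] := slice_full_notin_J iJ du rm sai W1w wi0.
by split=> // a; rewrite -mem_slice ?W1T ?WT memvf.
Qed.

Lemma W1_rows x : (x \in W1) = [forall k, (k \notin row_support W1) ==> (row k x == 0)].
Proof.
apply/idP/forallP => [W1x k|x0].
  by apply/implyP => /(row_support_row0 W1x) ->.
apply: memv_emb_rows => k; have [|k_out] := boolP (k \in row_support W1).
  by rewrite inE => /existsP [w /andP [W1w wk]]; have [-> _ _] := W1_contains_block W1w wk.
by rewrite (eqP (implyP (x0 k) k_out)) emb_row0 rpred0.
Qed.

Lemma W1_eq_W : W1 = W.
Proof.
apply: vspace_F2_eq_card; last exact: card_W_W1.
apply/subvP => x W1x; apply: memv_emb_rows => k.
have [|k_out] := boolP (k \in row_support W1).
  by rewrite inE => /existsP [w /andP [W1w wk]]; have [_ -> _] := W1_contains_block W1w wk.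
by rewrite (row_support_row0 W1x k_out) emb_row0 rpred0.
Qed.

Lemma W2_eq_W1 : W2 = W1.
Proof.
apply: vspace_F2_eq_card; last by rewrite card_W2_W card_W_W1.
apply/subvP => w W2w; rewrite W1_rows; apply/forallP => k; apply/implyP => k_out.
have := par_map_addW2 W2w; rewrite -W1_eq_W W1_rows => /forallP/(_ k)/implyP/(_ k_out).
rewrite linearD /= !row_par_map linearD /= addr_eq0_F2 => /eqP/perm_inj.
by move/(canRL (addKr _)) ->; rewrite addNr.
Qed.

Lemma wall_W1 : W != 0%VS -> vbar \notin U -> wall W1.
Proof.
move=> W0 vbarU; exists (row_support W1); split; last exact: W1_rows.
  by rewrite row_support_neq0 // W1_eq_W.
have [k kU] : exists k, emb_row k (row k vbar) \notin U.
  by apply/existsP; apply: contraR vbarU => /existsPn kU; apply: memv_emb_rows => k; apply/negPn.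
apply/eqP => suppT; have : k \in row_support W1 by rewrite suppT inE.
rewrite inE => /existsP [w /andP [W1w wk]]; have [_ _] := W1_contains_block W1w wk.
by rewrite inE negb_exists => /forallP /(_ (emb_row k (row k vbar))); rewrite in_block_emb_row kU.
Qed.

End OntoLinearPartition.

Theorem corollary3p11 (m b r : nat) (g : 'I_b -> {perm 'rV['F_2]_m})
    (U W1 W2 W : {vspace 'M['F_2]_(b, m)}) (vbar : 'M['F_2]_(b, m)) :
  (1 < m)%N -> (1 < b)%N ->
  par_map g 0 = 0 ->
  \dim U = (b * m).-1 ->
  (W1 <= U)%VS -> (W2 <= U)%VS -> vbar \notin U ->
  (forall i : 'I_b, i \notin J_of U ->
     [/\ diff_unif (g i) = (2 ^ r)%N, (r < m)%N & strongly_anti_inv (r - 1) (g i)]) ->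
  (forall j : 'I_b, j \in J_of U ->
     [/\ diff_unif (g j) = (2 ^ r)%N, (r < m - 1)%N & strongly_anti_inv r (g j)]) ->
  ~ trivial_partition (Lpart W) ->
  maps_onto (par_map g) (LApart U W1 W2 vbar) (Lpart W) ->
  [/\ wall W1, wall W2, wall W, W1 = W2 /\ W2 = W & LApart U W1 W2 vbar = Lpart W1].
Proof.
move=> _ _ gam0 dimU W1U _ vbarU g_notin_J g_in_J ntriv gam_onto.
have W0 : W != 0%VS by apply/eqP => W0; apply: ntriv; left; rewrite W0 Lpart0.
have W1W := W1_eq_W gam0 gam_onto W1U dimU g_notin_J g_in_J.
have W2W1 := W2_eq_W1 gam0 gam_onto W1U dimU g_notin_J g_in_J.
have wallW1 := wall_W1 gam0 gam_onto W1U dimU g_notin_J g_in_J W0 vbarU.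
by rewrite W2W1 -W1W; split; rewrite ?(LApart_hyperplane dimU).
Qed.
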